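(* Let $p,q\geq 2$ be relatively prime integers and $x,y,a\in A_{pq}$. Then $g_{p,q}(x,a)\equiv g_{p,q}(y,a)\pmod q$ if and only if $x\equiv y\pmod q$.
   Context: For an integer $n>1$, $A_n=\{0,1,\dots,n-1\}$. Define $g_{p,q}:A_{pq}\times A_{pq}\to A_{pq}$ by writing $x=x_1q+x_0$, $y=y_1q+y_0$ with $x_0,y_0\in A_q$, $x_1,y_1\in A_p$ (uniquely), and setting $g_{p,q}(x,y)=x_0p+y_1$. *)

From mathcomp Require Import all_boot.

(* A_n = {0,...,n-1} is represented by naturals x with x < n.
   For x, y in A_{pq}: x = x1*q + x0 with x0 = x %% q in A_q, x1 = x %/ q in A_p;
   g_{p,q}(x,y) = x0 * p + y1. *)
Definition g (p q x y : nat) : nat := (x %% q) * p + y %/ q.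

From mathcomp Require Import all_boot.

(* Modulo q, g p q x a is x * p + a %/ q, and multiplication by p is a
   bijection of Z/qZ because p is coprime to q. *)

Lemma eqn_modMr_coprime p q m n : coprime p q ->
  (m * p == n * p %[mod q]) = (m == n %[mod q]).
Proof.
move=> co_pq; wlog le_nm : m n / n <= m.
  by move=> IH; case: (leqP n m) => [|/ltnW] /IH //; rewrite eq_sym [RHS]eq_sym.
rewrite !eqn_mod_dvd ?leq_mul2r ?le_nm ?orbT // -mulnBl.
by rewrite Gauss_dvdl // coprime_sym.
Qed.

Lemma g_eq_mod p q x y a : coprime p q ->
  (g p q x a == g p q y a %[mod q]) = (x == y %[mod q]).
Proof. by move=> co_pq; rewrite /g eqn_modDr eqn_modMr_coprime // !modn_mod. Qed.

Theorem lemma3 (p q x y a : nat) :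
  2 <= p -> 2 <= q -> coprime p q ->
  x < p * q -> y < p * q -> a < p * q ->
  (g p q x a = g p q y a %[mod q]) <-> (x = y %[mod q]).
Proof.
move=> _ _ co_pq _ _ _; have eq_mod_g := g_eq_mod p q x y a co_pq.
by split=> /eqP; [rewrite eq_mod_g | rewrite -eq_mod_g] => /eqP.
Qed.
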